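(* For every $n \in \mathbb{N}$, there is a finite simple digraph $D$ with $\vec{\chi}(D) \geq n$ and $\omega(D) \leq 3$ such that $D$ has no induced directed cycle of odd length at least $5$.
   Context: A digraph is simple if for any two distinct vertices $u,v$ it has at most one of the edges $uv$, $vu$ (and no loops). The underlying undirected graph of a digraph $D$ has vertex set $V(D)$, with $u,v$ adjacent iff $uv$ or $vu$ is an edge of $D$. The clique number $\omega(D)$ of a digraph is the clique number of its underlying undirected graph. A digraph is acyclic if it contains no directed cycle. A $k$-dicoloring of $D$ is a map $f:V(D)\to\{1,\dots,k\}$ such that each color class induces an acyclic subdigraph; the dichromatic number $\vec{\chi}(D)$ is the least $k$ for which a $k$-dicoloring exists. An induced directed cycle is a directed cycle $v_1v_2\cdots v_\ell v_1$ whose vertex set induces in $D$ a subdigraph with exactly the edges $v_iv_{i+1}$ (indices mod $\ell$). *)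

From mathcomp Require Import all_boot.
Set Implicit Arguments. Unset Strict Implicit. Unset Printing Implicit Defensive.

Definition simple_digraph (T : finType) (E : rel T) : Prop :=
  forall u v : T, ~~ (E u v && E v u) /\ ~~ E u u.

Definition succ_mod (l : nat) (i : 'I_l) : nat := (i.+1 %% l)%N.

Definition dicycle_in (T : finType) (E : rel T) (S : pred T) (l : nat)
    (c : 'I_l -> T) : Prop :=
  (2 <= l)%N /\ injective c /\ (forall i, S (c i)) /\
  (forall i j : 'I_l, nat_of_ord j = succ_mod i -> E (c i) (c j)).

Definition acyclic_on (T : finType) (E : rel T) (S : pred T) : Prop :=
  forall (l : nat) (c : 'I_l -> T), ~ dicycle_in E S c.

Definition dicoloring (T : finType) (E : rel T) (k : nat) (f : T -> 'I_k) : Prop :=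
  forall a : 'I_k, acyclic_on E (fun v => f v == a).

Definition dichromatic_ge (T : finType) (E : rel T) (n : nat) : Prop :=
  forall k : nat, (k < n)%N -> forall f : T -> 'I_k, ~ dicoloring E f.

Definition adj (T : finType) (E : rel T) (u v : T) : bool := E u v || E v u.

Definition clique_number_le (T : finType) (E : rel T) (w : nat) : Prop :=
  forall K : {set T},
    (forall u v, u \in K -> v \in K -> u != v -> adj E u v) -> (#|K| <= w)%N.

Definition induced_dicycle (T : finType) (E : rel T) (l : nat) (c : 'I_l -> T) : Prop :=
  (2 <= l)%N /\ injective c /\
  (forall i j : 'I_l, E (c i) (c j) <-> nat_of_ord j = succ_mod i).

From mathcomp Require Import all_boot zify.
Set Implicit Arguments. Unset Strict Implicit. Unset Printing Implicit Defensive.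

(* Induction on n. Given D, add a large independent set of hubs and, for every
   injective map g from V(D) to the hubs, two copies of D: an out-copy in which
   each vertex u sends an arc to g u, and an in-copy in which g v sends an arc
   to each vertex v; every in-copy vertex also sends an arc to every out-copy
   vertex with the same hub. In a dicolouring with as few colours as D needs,
   every copy sees every colour c. Hence fewer than |V(D)| hubs of colour c
   have no in-neighbour of colour c (else the out-copy over them has a vertex
   of colour c pointing to one of them), and fewer than |V(D)| have one (else
   the in-copy over them closes a monochromatic triangle with such an
   in-neighbour); this is impossible with enough hubs. As the maps are
   injective, a clique not inside one copy of D meets hubs, in-copies and
   out-copies at most once each; a directed cycle through a hub has a chord,
   and arcs only lead from in-copies to out-copies, so an induced directed
   cycle of length at least 4 lies inside one copy of D. *)
Lemma exists_injective_into (T Y : finType) (A : {set Y}) :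
  #|T| <= #|A| -> exists g : {ffun T -> Y}, injectiveb g /\ forall u, g u \in A.
Proof.
move=> le_TA; exists [ffun u => enum_val (widen_ord le_TA (enum_rank u))]; split.
  apply/injectiveP => u v; rewrite !ffunE => /enum_val_inj /(congr1 val) /= /val_inj.
  exact: enum_rank_inj.
by move=> u; rewrite ffunE enum_valP.
Qed.

Lemma card_le_fibers (Y C : finType) (f : Y -> C) (I : {set C}) (b : nat) :
  (forall y, f y \in I) -> (forall c, c \in I -> #|[set y | f y == c]| <= b) ->
  #|Y| <= #|I| * b.
Proof.
move=> fI fib; have -> : #|Y| = \sum_(y : Y) 1 by rewrite sum1_card.
rewrite (partition_big f (mem I)) //= -sum_nat_const.
apply: leq_sum => c cI; apply: leq_trans (fib c cI).
by rewrite -sum1_card; apply: eq_leq; apply: eq_bigl => y; rewrite inE.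
Qed.

Lemma val_iter_ordS l (i : 'I_l) m : val (iter m (@ordS l) i) = (i + m) %% l.
Proof.
elim: m => [|m IHm] /=; first by rewrite addn0 modn_small.
by rewrite IHm -addn1 modnDml -addnA addn1.
Qed.

Lemma ordS_closed l (P : pred 'I_l) (i0 : 'I_l) :
  P i0 -> (forall i, P i -> P (ordS i)) -> forall j, P j.
Proof.
move=> Pi0 PS j.
have Piter m : P (iter m (@ordS l) i0) by elim: m => //= m /PS.
have -> : j = iter (j + l - i0) (@ordS l) i0.
  apply: val_inj; rewrite val_iter_ordS (_ : i0 + _ = j + l); last first.
    by have := ltn_ord i0; lia.
  by rewrite modnDr modn_small.
exact: Piter.
Qed.

Lemma ord_pred_closed l (P : pred 'I_l) (i0 : 'I_l) :
  P i0 -> (forall i, P (ordS i) -> P i) -> forall j, P j.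
Proof.
move=> Pi0 PS j; apply: contraT => nPj.
have nP_all := @ordS_closed l (predC P) j nPj (fun i => contra (PS i)).
by have := nP_all i0; rewrite /= Pi0.
Qed.

Lemma ordS3_neq l (i : 'I_l) : 3 < l -> iter 3 (@ordS l) i != i.
Proof.
move=> l_gt3; apply/eqP => /(congr1 val); rewrite val_iter_ordS /= => /eqP.
rewrite -{2}(modn_small (ltn_ord i)) -{2}(addn0 i) eqn_modDl.
by rewrite mod0n modn_small.
Qed.

Lemma dicycle3_not_acyclic (T : finType) (E : rel T) (S : pred T) (a b c : T) :
  E a b -> E b c -> E c a -> uniq [:: a; b; c] -> S a -> S b -> S c ->
  ~ acyclic_on E S.
Proof.
move=> ab bc ca uabc Sa Sb Sc /(_ 3 (tnth [tuple a; b; c])); apply; split=> //.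
split; first exact/tuple_uniqP.
split; first by move=> [[|[|[|i]]] ?].
by move=> [[|[|[|i]]] ?] [[|[|[|j]]] ?].
Qed.

Lemma induced_dicycle_arc (T : finType) (E : rel T) l (c : 'I_l -> T) :
  induced_dicycle E c -> forall i j, E (c i) (c j) = (j == ordS i).
Proof.
case=> _ [_ arcs] i j; apply/idP/eqP => [/arcs ij | ->]; last exact/arcs.
exact: val_inj.
Qed.

Lemma dicoloring_embed (T T' : finType) (E : rel T) (E' : rel T') (phi : T -> T')
    k (F : T' -> 'I_k) :
  injective phi -> {homo phi : u v / E u v >-> E' u v} ->
  dicoloring E' F -> dicoloring E (F \o phi).
Proof.
move=> phi_inj phiE F_ok a l c [l_ge2 [c_inj [c_col arcs]]].
apply: (F_ok a l (phi \o c)); split=> //; split; first exact: inj_comp.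
by split=> // i j /arcs /phiE.
Qed.

Lemma induced_dicycle_embed (T T' : finType) (E : rel T) (E' : rel T') (phi : T -> T')
    l (c : 'I_l -> T) (c' : 'I_l -> T') :
  {mono phi : u v / E u v >-> E' u v} -> (forall i, c' i = phi (c i)) ->
  induced_dicycle E' c' -> induced_dicycle E c.
Proof.
move=> phiE c'E [l_ge2 [c'_inj arcs]]; split=> //; split.
  by move=> i j cij; apply: c'_inj; rewrite !c'E cij.
by move=> i j; rewrite -phiE -!c'E; apply: arcs.
Qed.

Definition dicolorings_use (T : finType) (E : rel T) (n : nat) : Prop :=
  forall k (f : T -> 'I_k), dicoloring E f -> n <= #|[set f x | x : T]|.

Definition no_long_induced_dicycle (T : finType) (E : rel T) : Prop :=
  forall l (c : 'I_l -> T), 3 < l -> ~ induced_dicycle E c.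

Section Extension.

Variables (T : finType) (E : rel T) (N : nat).

Definition ext_vertex : finType := ('I_N + bool * ({ffun T -> 'I_N} * T))%type.

(* [copy false g] is the out-copy over [g] and [copy true g] the in-copy;
   copies over non-injective maps are just isolated copies of D. *)
Definition hub (y : 'I_N) : ext_vertex := inl y.
Definition copy (t : bool) (g : {ffun T -> 'I_N}) (u : T) : ext_vertex := inr (t, (g, u)).

Definition ext_arc : rel ext_vertex := fun x z =>
  match x, z with
  | inl _, inl _ => false
  | inl y, inr (t, (h, v)) => t && injectiveb h && (h v == y)
  | inr (t, (g, u)), inl y => ~~ t && injectiveb g && (g u == y)
  | inr (t, (g, u)), inr (t', (g', u')) =>
      if t == t' then (g == g') && E u u'
      else t && injectiveb g && injectiveb g' && (g' u' == g u)
  end.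

Lemma ext_arc_copy t g u u' : ext_arc (copy t g u) (copy t g u') = E u u'.
Proof. by rewrite /= !eqxx. Qed.

Lemma copy_inj t g : injective (copy t g).
Proof. by move=> u v [->]. Qed.

Lemma ext_simple : simple_digraph E -> simple_digraph ext_arc.
Proof.
move=> E_simple x y; split; last first.
  by case: x => [//|[t [g u]]] /=; rewrite !eqxx; case: (E_simple u u).
case: x y => [y|[t [g u]]] [y'|[t' [g' u']]] //=.
- by case: t'; rewrite ?andbF.
- by case: t; rewrite ?andbF.
case: (eqVneq t t') => [_|]; last by case: t t' => [] [] //= _; rewrite andbF.
by case: (eqVneq g g') => //= _; case: (E_simple u u').
Qed.

Lemma ext_arc_hub_triangle x y z : ext_arc x (hub y) -> ext_arc (hub y) z -> ext_arc z x.
Proof.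
case: x => [?|[[] [g u]]] //; case: z => [?|[[] [h v]]] //=.
by move=> /andP[ig /eqP gu] /andP[ih /eqP hv]; rewrite ig ih gu hv eqxx.
Qed.

Lemma ext_arc_from_out_copy g u t g' u' :
  ext_arc (copy false g u) (copy t g' u') -> t = false /\ g' = g.
Proof. by case: t => //= /andP[/eqP]. Qed.

Lemma ext_arc_to_in_copy t g u g' u' :
  ext_arc (copy t g u) (copy true g' u') -> t = true /\ g' = g.
Proof. by case: t => //= /andP[/eqP]. Qed.

Definition side (x : ext_vertex) : option bool :=
  if x is inr (t, _) then Some t else None.

Definition attached_hub (x : ext_vertex) : 'I_N :=
  match x with inl y => y | inr (_, (g, u)) => g u end.

Lemma ext_adj_copies t g u g' u' :
  adj ext_arc (copy t g u) (copy t g' u') -> g = g' /\ adj E u u'.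
Proof.
by rewrite /adj /= eqxx => /orP[] /andP[/eqP gg' e]; rewrite e ?orbT.
Qed.

Lemma ext_adj_across w t g u : side w != Some t ->
  adj ext_arc w (copy t g u) -> injectiveb g /\ g u = attached_hub w.
Proof.
case: w => [y|[t' [h v]]] /=.
  by rewrite /adj /=; case: t => _ /orP[] /andP[/andP[_ ->] /eqP].
rewrite /adj /= => /eqP t't; rewrite eq_sym.
have /negbTE -> : t != t' by apply/eqP => tt'; apply: t't; rewrite tt'.
by case/orP=> /andP[/andP[/andP[_ ?] ?] /eqP e]; split; rewrite // e.
Qed.

Lemma ext_clique : clique_number_le E 3 -> clique_number_le ext_arc 3.
Proof.
move=> E_cl K K_cl.
pose twins (xy : ext_vertex * ext_vertex) :=
  [&& xy.1 \in K, xy.2 \in K, xy.1 != xy.2 & side xy.1 == side xy.2].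
case: (pickP twins) => [[x y] /and4P[xK yK nxy /eqP sxy] | no_twins]; last first.
  have side_inj : {in K &, injective side}.
    move=> x y xK yK sxy; apply/eqP; apply: contraT => nxy.
    by have := no_twins (x, y); rewrite /twins /= xK yK nxy sxy eqxx.
  by have := @leq_card_in _ _ side K side_inj; rewrite card_option card_bool; apply.
case: x y xK yK nxy sxy => [x|[t [g u]]] [y|[t' [g' u']]] //= xK yK nxy.
  by have := K_cl _ _ xK yK nxy.
case=> t't; subst t'; rewrite -/(copy t g u) -/(copy t g' u') in xK yK nxy.
have [gg' _] := ext_adj_copies (K_cl _ _ xK yK nxy); subst g'.
have K_in_copy w : w \in K -> exists v, w = copy t g v.
  move=> wK; case: (eqVneq (side w) (Some t)) => sw.
    case: w wK sw => [//|[t'' [h v]]] wK [t''t]; subst t''.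
    rewrite -/(copy t h v) in wK *.
    case: (eqVneq (copy t h v) (copy t g u)) => [-> | nw]; first by exists u.
    by have [-> _] := ext_adj_copies (K_cl _ _ wK xK nw); exists v.
  have nw z : side z = Some t -> w != z by move=> sz; apply: contraNneq sw => ->; rewrite sz.
  have [g_inj gu] := ext_adj_across sw (K_cl _ _ wK xK (nw (copy t g u) erefl)).
  have [_ gu'] := ext_adj_across sw (K_cl _ _ wK yK (nw (copy t g u') erefl)).
  by case/eqP: nxy; rewrite /copy (injectiveP _ g_inj u u') // gu gu'.
set K' := [set v | copy t g v \in K].
have sub_K : K \subset [set copy t g v | v in K'].
  apply/subsetP => w wK; have [v wv] := K_in_copy w wK.
  by apply/imsetP; exists v; rewrite // inE -wv.
apply: leq_trans (subset_leq_card sub_K) (leq_trans (leq_imset_card _ _) _).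
apply: E_cl => v v'; rewrite !inE => vK v'K nvv'.
have ncopy : copy t g v != copy t g v' by apply: contra nvv' => /eqP [->].
by have [] := ext_adj_copies (K_cl _ _ vK v'K ncopy).
Qed.

Lemma ext_no_long_induced_dicycle :
  no_long_induced_dicycle E -> no_long_induced_dicycle ext_arc.
Proof.
move=> E_ind l c l_gt3 c_ind; have arc := induced_dicycle_arc c_ind.
have c_copy i : exists t g u, c i = copy t g u.
  case ci: (c i) => [y|[t [g u]]]; last by exists t, g, u.
  have := ext_arc_hub_triangle (x := c (ord_pred i)) (y := y) (z := c (ordS i)).
  rewrite -[hub y]ci !arc ord_predK !eqxx => /(_ isT isT) /eqP /(congr1 (@ordS l)).
  by rewrite ord_predK => i_eq; have := ordS3_neq i l_gt3; rewrite /= -i_eq eqxx.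
have [t [g [u0 c_i0]]] := c_copy (Ordinal (ltnW (ltnW l_gt3))).
pose in_copy b i := [exists v, c i == copy b g v].
have in_copy_i0 : in_copy t (Ordinal (ltnW (ltnW l_gt3))).
  by apply/existsP; exists u0; rewrite c_i0.
have all_in_copy : forall i, in_copy t i.
  case: t {c_i0} in_copy_i0 => in_copy_i0.
    apply: (ord_pred_closed in_copy_i0) => i /existsP[v /eqP ciSv].
    have [t' [g' [u' ci]]] := c_copy i; apply/existsP; exists u'.
    by have := arc i (ordS i); rewrite eqxx ci ciSv => /ext_arc_to_in_copy[-> ->].
  apply: (ordS_closed in_copy_i0) => i /existsP[v /eqP civ].
  have [t' [g' [u' ciS]]] := c_copy (ordS i); apply/existsP; exists u'.
  by have := arc i (ordS i); rewrite eqxx civ ciS => /ext_arc_from_out_copy[-> ->].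
pose u i := xchoose (existsP (all_in_copy i)).
apply: (E_ind l u l_gt3); apply: induced_dicycle_embed c_ind => [v v'|i].
  exact: ext_arc_copy.
exact/eqP/(xchooseP (existsP (all_in_copy i))).
Qed.

Section Coloring.

Variables (n k : nat) (F : ext_vertex -> 'I_k).
Hypotheses (E_col : dicolorings_use E n) (F_ok : dicoloring ext_arc F).
Hypothesis few_colors : #|[set F x | x : ext_vertex]| <= n.

Lemma copy_sees_all_colors t g c :
  c \in [set F x | x : ext_vertex] -> exists u, F (copy t g u) = c.
Proof.
have copy_hom : {homo copy t g : u v / E u v >-> ext_arc u v}.
  by move=> u v; rewrite ext_arc_copy.
have copy_colors := E_col (dicoloring_embed (@copy_inj t g) copy_hom F_ok).
have sub : [set (F \o copy t g) u | u : T] \subset [set F x | x : ext_vertex].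
  by apply/subsetP => _ /imsetP[u _ ->]; apply/imsetP; exists (copy t g u).
have /eqP <- : [set (F \o copy t g) u | u : T] == [set F x | x : ext_vertex].
  by rewrite eqEcard sub (leq_trans few_colors).
by case/imsetP=> u _ ->; exists u.
Qed.

Lemma hub_color_class_small c :
  c \in [set F x | x : ext_vertex] -> #|[set y | F (hub y) == c]| <= 2 * #|T|.
Proof.
move=> cF; set Yc := [set y | F (hub y) == c].
set Unreached := [set y in Yc | [forall x, ext_arc x (hub y) ==> (F x != c)]].
have small_unreached : #|Unreached| < #|T|.
  rewrite ltnNge; apply/negP => /exists_injective_into[g [g_inj gUnreached]].
  have [u Fu] := copy_sees_all_colors false g cF.
  have := gUnreached u; rewrite inE => /andP[_ /forallP /(_ (copy false g u))].
  by rewrite /= g_inj eqxx Fu eqxx.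
have small_reached : #|Yc :\: Unreached| < #|T|.
  rewrite ltnNge; apply/negP => /exists_injective_into[h [h_inj hReached]].
  have [v Fv] := copy_sees_all_colors true h cF.
  have := hReached v; rewrite !inE => /andP[+ Fhv]; rewrite Fhv negb_forall.
  case/existsP=> x; rewrite negb_imply negbK => /andP[x_hv Fx].
  case: x x_hv Fx => [//|[[] [g u]]] x_hv Fx; first by rewrite /= in x_hv.
  have hv_v : ext_arc (hub (h v)) (copy true h v) by rewrite /= h_inj eqxx.
  apply: (dicycle3_not_acyclic x_hv hv_v (ext_arc_hub_triangle x_hv hv_v) _ Fx Fhv
            _ (@F_ok c)); [by [] | exact/eqP].
rewrite -(cardsID Unreached Yc) mul2n -addnn leq_add //.
  by apply: leq_trans (subset_leq_card (subsetIr _ _)) (ltnW small_unreached).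
exact: ltnW.
Qed.

End Coloring.

Lemma ext_dicolorings_use n :
  dicolorings_use E n -> n * (2 * #|T|) < N -> dicolorings_use ext_arc n.+1.
Proof.
move=> E_col N_big k F F_ok; rewrite ltnNge; apply/negP => few_colors.
have F_hub y : F (hub y) \in [set F x | x : ext_vertex] by apply: imset_f.
have := card_le_fibers F_hub (hub_color_class_small E_col F_ok few_colors).
rewrite card_ord => /leq_trans/(_ (leq_mul few_colors (leqnn _))).
by rewrite leqNgt N_big.
Qed.

End Extension.

Lemma exists_digraph n : exists (T : finType) (E : rel T),
  [/\ simple_digraph E, dicolorings_use E n, clique_number_le E 3
     & no_long_induced_dicycle E].
Proof.
elim: n => [|n [T [E [E_simple E_col E_cl E_ind]]]].
  exists unit, (fun _ _ => false); split=> // [K _ | l c l_gt3 c_ind].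
    by rewrite (leq_trans (max_card _)) // card_unit.
  pose i0 : 'I_l := Ordinal (ltnW (ltnW l_gt3)).
  by have := induced_dicycle_arc c_ind i0 (ordS i0); rewrite eqxx.
set N := (n * (2 * #|T|)).+1.
exists _, (@ext_arc _ E N); split.
- exact: ext_simple.
- exact: ext_dicolorings_use.
- exact: ext_clique.
- exact: ext_no_long_induced_dicycle.
Qed.

Theorem theorem1p5 :
  forall n : nat,
    exists (T : finType) (E : rel T),
      simple_digraph E /\
      dichromatic_ge E n /\
      clique_number_le E 3 /\
      (forall (l : nat) (c : 'I_l -> T),
          odd l -> (5 <= l)%N -> ~ induced_dicycle E c).
Proof.
move=> n; have [T [E [E_simple E_col E_cl E_ind]]] := exists_digraph n.
exists T, E; do !split=> //.
  move=> k k_lt_n f f_ok; have := leq_trans (E_col k f f_ok) (max_card _).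
  by rewrite card_ord leqNgt k_lt_n.
by move=> l c _ l_ge5; apply: E_ind (ltnW l_ge5).
Qed.
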